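(* Let $G$ be a graph and let $\{H_1,\ldots,H_k\}$ be an isometric cover of $G$. Then $\mathrm{gp}(G)\le \sum_{i=1}^k \mathrm{gp}(H_i)$.
   Context: All graphs are finite, simple and connected. A subgraph $H$ of $G$ is isometric if $d_H(x,y)=d_G(x,y)$ for all $x,y\in V(H)$. A set $\{H_1,\ldots,H_k\}$ of subgraphs of $G$ is an isometric cover of $G$ if each $H_i$ is isometric in $G$ and $\bigcup_{i=1}^k V(H_i)=V(G)$. A set $S$ of vertices of a graph is a general position set if no three vertices of $S$ lie on a common geodesic (shortest path) of that graph; $\mathrm{gp}(G)$ denotes the maximum cardinality of a general position set of $G$. *)

From mathcomp Require Import all_boot.
From Stdlib Require Import ClassicalDescription.
Set Implicit Arguments. Unset Strict Implicit. Unset Printing Implicit Defensive.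

(* A graph-like
   object with vertex set V : {set T} and edge relation f : rel T (all edges
   inside V) is used for subgraphs. *)

Definition simple_graph (T : finType) (e : rel T) : Prop :=
  symmetric e /\ irreflexive e.

Definition connected_graph (T : finType) (e : rel T) : Prop :=
  forall x y : T, connect e x y.

Definition subgraph (T : finType) (e : rel T) (V : {set T}) (f : rel T) : Prop :=
  symmetric f /\ (forall x y, f x y -> [&& e x y, x \in V & y \in V]).

(* a walk from x to y along f: the vertex sequence is x :: p, length size p *)
Definition walk (T : finType) (f : rel T) (x y : T) (p : seq T) : bool :=
  path f x p && (last x p == y).

Definition is_dist (T : finType) (f : rel T) (x y : T) (n : nat) : Prop :=
  (exists p, walk f x y p /\ size p = n) /\
  (forall p, walk f x y p -> n <= size p).

Definition geodesic (T : finType) (f : rel T) (x y : T) (p : seq T) : Prop :=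
  walk f x y p /\ (forall q, walk f x y q -> size p <= size q).

Definition isometric (T : finType) (e : rel T) (V : {set T}) (f : rel T) : Prop :=
  subgraph e V f /\
  forall x y, x \in V -> y \in V -> forall n, is_dist f x y n <-> is_dist e x y n.

Definition gp_set (T : finType) (f : rel T) (S : {set T}) : Prop :=
  forall x y p, geodesic f x y p ->
    ~ (exists u v w, [/\ u \in S, v \in S & w \in S] /\
        [/\ u != v, v != w & u != w] /\
        [/\ u \in x :: p, v \in x :: p & w \in x :: p]).

Definition pb (P : Prop) : bool :=
  if excluded_middle_informative P then true else false.

Definition gp (T : finType) (V : {set T}) (f : rel T) : nat :=
  \max_(S : {set T} | (S \subset V) && pb (gp_set f S)) #|S|.

From mathcomp Require Import all_boot.

(* A geodesic of an isometric subgraph H is a walk of G whose length is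
   d_H = d_G, hence a geodesic of G; so a general position set S of G
   meets every H_i in a general position set of H_i.  As the H_i cover G,
   the sets S :&: V_i cover S, and the union bound gives
   #|S| <= \sum_i #|S :&: V_i| <= \sum_i gp(H_i). *)

Set Implicit Arguments.
Unset Strict Implicit.
Unset Printing Implicit Defensive.

Lemma pbP (P : Prop) : reflect P (pb P).
Proof. by rewrite /pb; case: ClassicalDescription.excluded_middle_informative; constructor. Qed.

Lemma card_bigcup_leq (T I : finType) (A : I -> {set T}) :
  #|\bigcup_i A i| <= \sum_i #|A i|.
Proof.
elim/big_ind2: _ => [|n1 U1 n2 U2 le1 le2|//]; first by rewrite cards0.
exact: leq_trans (leq_card_setU U1 U2).1 (leq_add le1 le2).
Qed.

Section IsometricSubgraph.

Variables (T : finType) (e f : rel T) (V : {set T}).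
Hypothesis iso_f : isometric e V f.

Lemma isometric_edge_sub x y : f x y -> e x y.
Proof. by case: iso_f => -[_ fE] _ /fE /and3P[]. Qed.

Lemma isometric_edge_mem x y : f x y -> (x \in V) && (y \in V).
Proof. by case: iso_f => -[_ fE] _ /fE /and3P[_ -> ->]. Qed.

Lemma isometric_path_mem x p : path f x p -> p != [::] -> {subset x :: p <= V}.
Proof.
move=> fp p_nil; apply/allP; move: fp p_nil.
elim: p x => [//|a p IHp] x /= /andP[/isometric_edge_mem/andP[-> aV] fp] _.
by case: p IHp fp => [|b p] IHp fp; [rewrite /= aV | exact: IHp].
Qed.

Lemma isometric_walk_mem x y p : walk f x y p -> p != [::] -> (x \in V) && (y \in V).
Proof.
case/andP=> fp /eqP <- /(isometric_path_mem fp) inV.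
by rewrite inV ?mem_head // inV ?mem_last.
Qed.

Lemma geodesic_is_dist x y p : geodesic f x y p -> is_dist f x y (size p).
Proof. by case=> wp minp; split; first by exists p. Qed.

Lemma isometric_geodesic x y p : geodesic f x y p -> geodesic e x y p.
Proof.
move=> geo_f; have [wf _] := geo_f; have /andP[fp lastp] := wf.
split=> [|q we]; first by rewrite /walk (sub_path isometric_edge_sub fp).
have [-> // | p_nil] := eqVneq p [::].
have /andP[xV yV] := isometric_walk_mem wf p_nil.
have [_ min_e] := (iso_f.2 x y xV yV _).1 (geodesic_is_dist geo_f).
exact: min_e.
Qed.

Lemma gp_set_isometric (S : {set T}) : gp_set e S -> gp_set f S.
Proof. by move=> gpS x y p /isometric_geodesic; apply: gpS. Qed.

End IsometricSubgraph.

Lemma gp_setS (T : finType) (f : rel T) (S S' : {set T}) :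
  S' \subset S -> gp_set f S -> gp_set f S'.
Proof.
move=> /subsetP sS' gpS x y p gp_xy [u [v [w [[uS vS wS] uvw]]]].
by apply: (gpS x y p gp_xy); exists u, v, w; split=> //; split; apply: sS'.
Qed.

Lemma gp_set_leq_gp (T : finType) (V : {set T}) (f : rel T) (S : {set T}) :
  S \subset V -> gp_set f S -> #|S| <= gp V f.
Proof. by move=> sSV /pbP gpS; apply: leq_bigmax_cond; rewrite sSV gpS. Qed.

Theorem theorem3p1 (T : finType) (e : rel T)
  (He : simple_graph e) (Hc : connected_graph e)
  (k : nat) (V : 'I_k -> {set T}) (E : 'I_k -> rel T)
  (Hiso : forall i, isometric e (V i) (E i))
  (Hcov : \bigcup_(i < k) V i = [set: T]) :
  gp [set: T] e <= \sum_(i < k) gp (V i) (E i).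
Proof.
apply/bigmax_leqP => S /andP[_ /pbP gpS].
have S_cover : S \subset \bigcup_(i < k) (S :&: V i).
  apply/subsetP => x xS; have : x \in \bigcup_(i < k) V i by rewrite Hcov inE.
  by case/bigcupP => i _ xV; apply/bigcupP; exists i; rewrite ?inE ?xS.
apply: leq_trans (subset_leq_card S_cover) _.
apply: leq_trans (card_bigcup_leq (fun i => S :&: V i)) _.
apply: leq_sum => i _.
apply: gp_set_leq_gp; first exact: subsetIr.
exact: (gp_set_isometric (Hiso i) (gp_setS (subsetIl S (V i)) gpS)).
Qed.
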